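(* Let $n_x,n_y,n_z\ge 1$ be integers, $N:=n_xn_yn_z$, and let $f\in[0,1]^N$. Let $\mu_1,\mu_2,\mu_3>0$. Then each of the following two minimization problems has a minimizer, i.e. the infimum is attained at some $(u,s,l)\in\mathbb{R}^N\times\mathbb{R}^N\times\mathbb{R}^N$ with $u+s+l=f$: (a) $\displaystyle \inf_{u,s,l\in\mathbb{R}^N,\ u+s+l=f}\ \Big(\mu_1\|\nabla_{x,z}u\|_{2,1}+\mu_2\|\Delta_z u\|_1+\iota_{[0,1]^N}(u)\Big)+\|\nabla_y s\|_1+\mu_3\|\nabla_{x,y}l\|_{2,1}$; (b) $\displaystyle \inf_{u,s,l\in\mathbb{R}^N,\ u+s+l=f}\ \Big(\mu_1\|\nabla_{x,y,z}u\|_{2,1}+\iota_{[0,1]^N}(u)\Big)+\|\nabla_y s\|_1+\mu_3\|\nabla_{x,y}l\|_{2,1}$.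
   Context: A 3D image of size $n_x\times n_y\times n_z$ is identified with a vector in $\mathbb{R}^N$, $N=n_xn_yn_z$ (column- and slice-wise reshaping). $\otimes$ denotes the Kronecker product and $I_m$ the $m\times m$ identity. For $m\ge1$, $D_m\in\mathbb{R}^{m,m}$ is the forward difference matrix whose $i$-th row, for $i=1,\dots,m-1$, has entry $-1$ in column $i$ and $1$ in column $i+1$ (zeros elsewhere), and whose last row is zero. $D_m^2\in\mathbb{R}^{m,m}$ is the matrix whose first and last rows are zero and whose $i$-th row, for $i=2,\dots,m-1$, has entries $1,-2,1$ in columns $i-1,i,i+1$ (zeros elsewhere). Set $D_x:=I_{n_z}\otimes I_{n_y}\otimes D_{n_x}$, $D_y:=I_{n_z}\otimes D_{n_y}\otimes I_{n_x}$, $D_z:=D_{n_z}\otimes I_{n_y}\otimes I_{n_x}$, $D_{zz}:=D^2_{n_z}\otimes I_{n_y}\otimes I_{n_x}$, and define $\nabla_y:=D_y$, $\Delta_z:=D_{zz}$, and the stacked operators $\nabla_{x,z}:=\begin{pmatrix}D_x\\ D_z\end{pmatrix}$, $\nabla_{x,y}:=\begin{pmatrix}D_x\\ D_y\end{pmatrix}$, $\nabla_{x,y,z}:=\begin{pmatrix}D_x\\ D_y\\ D_z\end{pmatrix}$. For $w\in\mathbb{R}^{dN}$ the grouped norm is $\|w\|_{2,1}:=\sum_{i=1}^N\big(\sum_{j=0}^{d-1}w_{i+jN}^2\big)^{1/2}$; $\|\cdot\|_1$ is the usual $\ell_1$ norm. For a set $\mathcal{C}$, $\iota_{\mathcal{C}}(u)=0$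 if $u\in\mathcal{C}$ and $+\infty$ otherwise. *)

From HB Require Import structures.
From mathcomp Require Import all_boot all_order all_algebra.
From mathcomp Require Import mxtens.
From mathcomp Require Import boolp reals constructive_ereal.
Set Implicit Arguments. Unset Strict Implicit. Unset Printing Implicit Defensive.
Import Order.TTheory GRing.Theory Num.Theory.
Local Open Scope ring_scope.

Section Defs.
Variable R : realType.

Definition Dfwd (m : nat) : 'M[R]_m :=
  \matrix_(i, j) (if (i.+1 < m)%N then (j == i.+1 :> nat)%:R - (j == i :> nat)%:R
                  else 0).

Definition D2 (m : nat) : 'M[R]_m :=
  \matrix_(i, j) (if ((0 < i) && (i.+1 < m))%N then
                    (j.+1 == i :> nat)%:R - 2 * (j == i :> nat)%:R
                    + (j == i.+1 :> nat)%:R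
                  else 0).

(* 3D operators, via Kronecker products (tensmx, A *t B, with the standard
   index convention (i,j) |-> i * p + j).  The image space has dimension
   nz * ny * nx = N. *)
Definition Dx nx ny nz : 'M[R]_(nz * ny * nx) := (1%:M *t 1%:M) *t Dfwd nx.
Definition Dy nx ny nz : 'M[R]_(nz * ny * nx) := (1%:M *t Dfwd ny) *t 1%:M.
Definition Dz nx ny nz : 'M[R]_(nz * ny * nx) := (Dfwd nz *t 1%:M) *t 1%:M.
Definition Dzz nx ny nz : 'M[R]_(nz * ny * nx) := (D2 nz *t 1%:M) *t 1%:M.

(* vertical stacking of d blocks F 0, ..., F (d-1), each N x M:
   row j * N + i of the stack is row i of F j *)
Definition stack d N M (F : 'I_d -> 'M[R]_(N, M)) : 'M[R]_(d * N, M) :=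
  \matrix_(k, c) F (mxtens_unindex k).1 (mxtens_unindex k).2 c.

Definition grad_xz nx ny nz : 'M[R]_(2 * (nz * ny * nx), nz * ny * nx) :=
  stack (fun j : 'I_2 => nth 0 [:: Dx nx ny nz; Dz nx ny nz] j).
Definition grad_xy nx ny nz : 'M[R]_(2 * (nz * ny * nx), nz * ny * nx) :=
  stack (fun j : 'I_2 => nth 0 [:: Dx nx ny nz; Dy nx ny nz] j).
Definition grad_xyz nx ny nz : 'M[R]_(3 * (nz * ny * nx), nz * ny * nx) :=
  stack (fun j : 'I_3 => nth 0 [:: Dx nx ny nz; Dy nx ny nz; Dz nx ny nz] j).

Definition norm21 d N (w : 'cV[R]_(d * N)) : R :=
  \sum_(i < N) Num.sqrt (\sum_(j < d) w (mxtens_index (j, i)) 0 ^+ 2).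

Definition norm1 N (w : 'cV[R]_N) : R := \sum_(i < N) `|w i 0|.

Definition in_box N (u : 'cV[R]_N) : Prop := forall i, 0 <= u i 0 <= 1.

Definition iota_box N (u : 'cV[R]_N) : \bar R :=
  if `[< in_box u >] then 0%E else +oo%E.

Local Open Scope ereal_scope.

Definition energy_a nx ny nz (mu1 mu2 mu3 : R)
  (u s l : 'cV[R]_(nz * ny * nx)) : \bar R :=
  ((mu1 * norm21 (grad_xz nx ny nz *m u) + mu2 * norm1 (Dzz nx ny nz *m u))%R%:E
     + iota_box u)
  + (norm1 (Dy nx ny nz *m s))%:E + (mu3 * norm21 (grad_xy nx ny nz *m l))%R%:E.

Definition energy_b nx ny nz (mu1 mu3 : R)
  (u s l : 'cV[R]_(nz * ny * nx)) : \bar R :=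
  ((mu1 * norm21 (grad_xyz nx ny nz *m u))%R%:E + iota_box u)
  + (norm1 (Dy nx ny nz *m s))%:E + (mu3 * norm21 (grad_xy nx ny nz *m l))%R%:E.

Definition is_minimizer N (E : 'cV[R]_N -> 'cV[R]_N -> 'cV[R]_N -> \bar R)
  (f u s l : 'cV[R]_N) : Prop :=
  (u + s + l = f)%R /\
  forall u' s' l' : 'cV[R]_N, (u' + s' + l' = f)%R -> E u s l <= E u' s' l'.

End Defs.

From HB Require Import structures.
From mathcomp Require Import all_boot all_order all_algebra.
From mathcomp Require Import mxtens.
From mathcomp Require Import boolp classical_sets reals constructive_ereal.
From mathcomp Require Import topology normedtype realfun derive matrix_normedtype.

(* Eliminating s = f - u - l leaves a continuous nonnegative function of (u, l),
   and the indicator confines u to the compact box [0,1]^N.  Only l can escape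
   to infinity, but the energy is unchanged under l -> l - c, s -> s + c whenever
   c is constant in x and y on each z-slice, since both nabla_{x,y} and nabla_y
   annihilate such c.  Normalising l to vanish on the lines x = y = 0 and
   telescoping forward differences bounds |l| by (n_x + n_y) ||nabla_{x,y} l||_{2,1},
   which is bounded on the sublevel set of the energy at (f, 0, 0).  The extreme
   value theorem on the resulting compact box gives a global minimizer. *)

Set Implicit Arguments. Unset Strict Implicit. Unset Printing Implicit Defensive.
Import Order.TTheory GRing.Theory Num.Theory.
Import numFieldTopology.Exports numFieldNormedType.Exports.
Local Open Scope classical_set_scope.
Local Open Scope ring_scope.

Definition idx nz ny nx (z : 'I_nz) (y : 'I_ny) (x : 'I_nx) : 'I_(nz * ny * nx) :=
  mxtens_index (mxtens_index (z, y), x).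
Arguments idx {nz ny nx}.

Lemma idx_ind nz ny nx (P : 'I_(nz * ny * nx) -> Prop) :
  (forall z y x, P (idx z y x)) -> forall k, P k.
Proof.
move=> Pidx k; case: k / mxtens_indexP => zy x; case: zy / mxtens_indexP => z y.
exact: Pidx.
Qed.

Section Operators.
Variable R : realType.

Lemma sum_mxtens_index m n (F : 'I_(m * n) -> R) :
  \sum_k F k = \sum_(i < m) \sum_(j < n) F (mxtens_index (i, j)).
Proof.
rewrite pair_big /= (reindex (@mxtens_index m n)) /=; first by apply: eq_bigr => -[].
by exists (@mxtens_unindex m n) => k _; rewrite (mxtens_indexK, mxtens_unindexK).
Qed.

Lemma sum_mx1_mul n (i : 'I_n) (G : 'I_n -> R) :
  \sum_j (1%:M : 'M[R]_n) i j * G j = G i.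
Proof.
rewrite (bigD1 i) //= big1 ?addr0; first by rewrite mxE eqxx mul1r.
by move=> j /negbTE ji; rewrite mxE eq_sym ji mul0r.
Qed.

Lemma mul_tens3mxE nz ny nx (A : 'M[R]_nz) (B : 'M[R]_ny) (C : 'M[R]_nx)
    (v : 'cV[R]_(nz * ny * nx)) z y x :
  (((A *t B) *t C) *m v) (idx z y x) 0 =
  \sum_c \sum_d \sum_b A z c * B y d * C x b * v (idx c d b) 0.
Proof.
rewrite mxE !sum_mxtens_index; apply: eq_bigr => c _; apply: eq_bigr => d _.
by apply: eq_bigr => b _; rewrite !tensmxE.
Qed.

Lemma mul_tens11mxE nz ny nx (C : 'M[R]_nx) (v : 'cV[R]_(nz * ny * nx)) z y x :
  (((1%:M *t 1%:M) *t C) *m v) (idx z y x) 0 = \sum_b C x b * v (idx z y b) 0.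
Proof.
rewrite mul_tens3mxE (eq_bigr (fun c => 1%:M z c *
    \sum_d (1%:M y d * \sum_b C x b * v (idx c d b) 0))); first by rewrite !sum_mx1_mul.
move=> c _; rewrite mulr_sumr; apply: eq_bigr => d _.
by rewrite !mulr_sumr; apply: eq_bigr => b _; rewrite !mulrA.
Qed.

Lemma mul_tens1mx1E nz ny nx (B : 'M[R]_ny) (v : 'cV[R]_(nz * ny * nx)) z y x :
  (((1%:M *t B) *t 1%:M) *m v) (idx z y x) 0 = \sum_d B y d * v (idx z d x) 0.
Proof.
rewrite mul_tens3mxE (eq_bigr (fun c => 1%:M z c *
    \sum_d (B y d * \sum_b 1%:M x b * v (idx c d b) 0))).
  by rewrite sum_mx1_mul; under eq_bigr do rewrite sum_mx1_mul.
move=> c _; rewrite mulr_sumr; apply: eq_bigr => d _.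
by rewrite !mulr_sumr; apply: eq_bigr => b _; rewrite !mulrA.
Qed.

Lemma Dfwd_mul_succ n (i j : 'I_n) (g : 'I_n -> R) : val j = i.+1 ->
  \sum_k Dfwd R n i k * g k = g j - g i.
Proof.
move=> ji; have iSn : (i.+1 < n)%N by rewrite -ji ltn_ord.
under eq_bigr do rewrite mxE iSn -ji mulrBl.
have sum_delta (l : 'I_n) : \sum_k (k == l)%:R * g k = g l.
  rewrite (bigD1 l) //= eqxx mul1r big1 ?addr0 // => k /negbTE ->.
  by rewrite mul0r.
by rewrite sumrB !sum_delta.
Qed.

Lemma Dfwd_mul_cst n (i : 'I_n) (c : R) : \sum_k Dfwd R n i k * c = 0.
Proof.
have [iSn | iSnN] := ltnP i.+1 n.
  by rewrite (@Dfwd_mul_succ _ i (Ordinal iSn)) ?subrr.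
by rewrite big1 // => k _; rewrite mxE ltnNge iSnN mul0r.
Qed.

Lemma ler_dist_Dfwd n (g : 'I_n.+1 -> R) (C : R) :
    (forall i, `|\sum_k Dfwd R n.+1 i k * g k| <= C) ->
  forall k, `|g k - g ord0| <= n%:R * C.
Proof.
move=> gC k; have C0 : 0 <= C := le_trans (normr_ge0 _) (gC ord0).
pose h j := g (inord j).
have h_step j : (j < n)%N -> `|h j.+1 - h j| <= C.
  move=> jn; have := gC (inord j).
  rewrite (@Dfwd_mul_succ _ _ (inord j.+1)) //= !inordK //; exact: ltnW.
have -> : g k - g ord0 = \sum_(0 <= j < k) (h j.+1 - h j).
  rewrite telescope_sumr // /h inord_val.
  by congr (_ - g _); apply: val_inj; rewrite /= inordK.
apply: le_trans (ler_norm_sum _ _ _) _.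
apply: le_trans (ler_sum_nat (G := fun=> C) _) _.
  by move=> j /andP[_ jk]; apply: h_step; exact: leq_trans jk (leq_ord k).
by rewrite sumr_const_nat subn0 -[C *+ k]mulr_natl ler_wpM2r // ler_nat -ltnS.
Qed.

Lemma norm1_ge0 n (w : 'cV[R]_n) : 0 <= norm1 w.
Proof. exact: sumr_ge0. Qed.

Lemma norm21_ge0 d n (w : 'cV[R]_(d * n)) : 0 <= norm21 w.
Proof. by apply: sumr_ge0 => i _; exact: sqrtr_ge0. Qed.

Lemma ler_norm21 d n (w : 'cV[R]_(d * n)) j i :
  `|w (mxtens_index (j, i)) 0| <= norm21 w.
Proof.
have le_term m (F : 'I_m -> R) k : (forall k, 0 <= F k) -> F k <= \sum_k F k.
  by move=> F0; rewrite (bigD1 k) //= lerDl sumr_ge0.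
apply: le_trans (le_term _ _ i (fun=> sqrtr_ge0 _)); rewrite -sqrtr_sqr ler_wsqrtr //.
by apply: (le_term _ (fun j => w (mxtens_index (j, i)) 0 ^+ 2)) => k; exact: sqr_ge0.
Qed.

Lemma mulmx_stackE d n m (F : 'I_d -> 'M[R]_(n, m)) (v : 'cV[R]_m) j i :
  (stack F *m v) (mxtens_index (j, i)) 0 = (F j *m v) i 0.
Proof. by rewrite !mxE; apply: eq_bigr => c _; rewrite mxE mxtens_indexK. Qed.

Lemma ler_norm21_stack d n m (F : 'I_d -> 'M[R]_(n, m)) (v : 'cV[R]_m) j i :
  `|(F j *m v) i 0| <= norm21 (stack F *m v).
Proof. by rewrite -mulmx_stackE; exact: ler_norm21. Qed.

Section Gradients.
Variables nx ny nz : nat.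
Local Notation N := (nz * ny * nx).

Lemma ler_Dx_grad_xy (l : 'cV[R]_N) k :
  `|(Dx R nx ny nz *m l) k 0| <= norm21 (grad_xy R nx ny nz *m l).
Proof. exact: (ler_norm21_stack _ _ ord0). Qed.

Lemma ler_Dy_grad_xy (l : 'cV[R]_N) k :
  `|(Dy R nx ny nz *m l) k 0| <= norm21 (grad_xy R nx ny nz *m l).
Proof. exact: (ler_norm21_stack _ _ ord_max). Qed.

Lemma Dx_mul_const_x (v : 'cV[R]_N) :
  (forall z y x x', v (idx z y x) 0 = v (idx z y x') 0) -> Dx R nx ny nz *m v = 0.
Proof.
move=> vx; apply/matrixP => k j; rewrite ord1 [RHS]mxE; move: k; apply: idx_ind => z y x.
by rewrite mul_tens11mxE (eq_bigr _ (fun b _ => congr1 _ (vx z y b x))) Dfwd_mul_cst.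
Qed.

Lemma Dy_mul_const_y (v : 'cV[R]_N) :
  (forall z y y' x, v (idx z y x) 0 = v (idx z y' x) 0) -> Dy R nx ny nz *m v = 0.
Proof.
move=> vy; apply/matrixP => k j; rewrite ord1 [RHS]mxE; move: k; apply: idx_ind => z y x.
by rewrite mul_tens1mx1E (eq_bigr _ (fun d _ => congr1 _ (vy z d y x))) Dfwd_mul_cst.
Qed.

End Gradients.

Section Profile.
Variables nx ny nz : nat.
Local Notation N := (nz * ny.+1 * nx.+1).
Local Notation Dx := (Dx R nx.+1 ny.+1 nz).
Local Notation Dy := (Dy R nx.+1 ny.+1 nz).
Local Notation grad_xy := (grad_xy R nx.+1 ny.+1 nz).

Definition zprofile (l : 'cV[R]_N) : 'cV[R]_N :=
  \col_k l (idx (mxtens_unindex (mxtens_unindex k).1).1 ord0 ord0) 0.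

Lemma zprofileE l z y x : zprofile l (idx z y x) 0 = l (idx z ord0 ord0) 0.
Proof. by rewrite mxE /idx !mxtens_indexK. Qed.

Lemma Dx_zprofile l : Dx *m zprofile l = 0.
Proof. by apply: Dx_mul_const_x => z y x x'; rewrite !zprofileE. Qed.

Lemma Dy_zprofile l : Dy *m zprofile l = 0.
Proof. by apply: Dy_mul_const_y => z y y' x; rewrite !zprofileE. Qed.

Lemma grad_xy_zprofile l : grad_xy *m zprofile l = 0.
Proof.
apply/matrixP => k j; rewrite ord1 [RHS]mxE.
case: k / mxtens_indexP => -[[|[|//]] ?] i.
- by rewrite mulmx_stackE /= Dx_zprofile mxE.
- by rewrite mulmx_stackE /= Dy_zprofile mxE.
Qed.

Lemma ler_norm_sub_zprofile l k :
  `|(l - zprofile l) k 0| <= (nx + ny)%:R * norm21 (grad_xy *m l).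
Proof.
move: k; apply: idx_ind => z y x; rewrite 2!mxE zprofileE.
set C := norm21 _.
have along_x : `|l (idx z y x) 0 - l (idx z y ord0) 0| <= nx%:R * C.
  apply: (ler_dist_Dfwd (g := fun x => l (idx z y x) 0) _ x) => i.
  by rewrite -mul_tens11mxE; exact: ler_Dx_grad_xy.
have along_y : `|l (idx z y ord0) 0 - l (idx z ord0 ord0) 0| <= ny%:R * C.
  apply: (ler_dist_Dfwd (g := fun y => l (idx z y ord0) 0) _ y) => i.
  by rewrite -mul_tens1mx1E; exact: ler_Dy_grad_xy.
rewrite -[_ - _](subrKA (l (idx z y ord0) 0)) natrD mulrDl.
exact: le_trans (ler_normD _ _) (lerD along_x along_y).
Qed.

End Profile.

End Operators.

Section MatrixContinuity.
Variable R : realType.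

Lemma continuous_mx (T : topologicalType) m n (v : T -> 'M[R]_(m, n)) :
  (forall i j, continuous (fun w => v w i j)) -> continuous v.
Proof.
move=> vc x A [P vxP PA]; apply: (filterS (fun w Pw => PA (v w) Pw)).
have : \forall w \near x, forall ij : 'I_m * 'I_n, P ij.1 ij.2 (v w ij.1 ij.2).
  by apply: filter_forall => -[i j]; exact: vc (vxP i j).
by apply: filterS => w Pw i j; exact: (Pw (i, j)).
Qed.

Lemma continuous_addfun (T : topologicalType) (g h : T -> R) :
  continuous g -> continuous h -> continuous (fun x => g x + h x).
Proof. by move=> gc hc x; exact: (continuousD (f := g) (g := h) (gc x) (hc x)). Qed.

Lemma continuous_scalefun (T : topologicalType) (c : R) (g : T -> R) :
  continuous g -> continuous (fun x => c * g x).
Proof.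
move=> gc x; apply: (continuousM (s := fun=> c) (t := g)) => //.
  exact: cst_continuous.
exact: (gc x).
Qed.

Lemma continuous_sum (T : topologicalType) n (F : 'I_n -> T -> R) :
  (forall i, continuous (F i)) -> continuous (fun w => \sum_i F i w).
Proof. by move=> Fc; apply: continuous_big => //; exact: add_continuous. Qed.

Lemma mulmx_continuous m n p (A : 'M[R]_(m, n)) :
  continuous (fun B : 'M[R]_(n, p) => A *m B).
Proof.
apply: continuous_mx => i j B; under eq_fun do rewrite mxE.
apply: continuous_sum => k {}B; apply: continuousM; first exact: cst_continuous.
exact: coord_continuous.
Qed.

End MatrixContinuity.

Lemma cV_compact (R : realType) n (A : 'I_n -> set R) :
  (forall i, compact (A i)) -> compact [set v : 'cV[R]_n | forall i, A i (v i 0)].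
Proof.
move=> Ac; have -> : [set v : 'cV[R]_n | forall i, A i (v i 0)] =
    trmx @` [set v : 'rV[R]_n | forall i, A i (v 0 i)].
  apply/seteqP; split=> v.
    by move=> Av; exists v^T; [move=> i; rewrite mxE | rewrite trmxK].
  by move=> [w Aw <-] i; rewrite mxE.
apply: continuous_compact; last exact: rV_compact.
apply: continuous_subspaceT; apply: continuous_mx => i j w.
under eq_fun do rewrite mxE; exact: coord_continuous.
Qed.

Lemma norm1_continuous (R : realType) n : continuous (@norm1 R n).
Proof.
apply: continuous_sum => i v.
by apply: continuous_comp; [exact: coord_continuous | exact: norm_continuous].
Qed.

Lemma norm21_continuous (R : realType) d n : continuous (@norm21 R d n).
Proof.
apply: continuous_sum => i v; apply: continuous_comp; last exact: sqrt_continuous.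
apply: continuous_sum => j {}v.
by apply: continuousM; exact: coord_continuous.
Qed.

Lemma norm1_mulmx_continuous (R : realType) n m (A : 'M[R]_(n, m)) :
  continuous (fun v : 'cV[R]_m => norm1 (A *m v)).
Proof.
by move=> v; apply: continuous_comp; [exact: mulmx_continuous | exact: norm1_continuous].
Qed.

Lemma norm21_mulmx_continuous (R : realType) d n m (A : 'M[R]_(d * n, m)) :
  continuous (fun v : 'cV[R]_m => norm21 (A *m v)).
Proof.
by move=> v; apply: continuous_comp; [exact: mulmx_continuous | exact: norm21_continuous].
Qed.


Section Existence.
Variables (R : realType) (nx ny nz : nat).
Local Notation N := (nz * ny.+1 * nx.+1).
Local Notation Dy := (Dy R nx.+1 ny.+1 nz).
Local Notation grad_xy := (grad_xy R nx.+1 ny.+1 nz).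
Variables (f : 'cV[R]_N) (mu3 : R) (T : 'cV[R]_N -> R).
Hypotheses (f_box : in_box f) (mu3_gt0 : 0 < mu3).
Hypotheses (T_cont : continuous T) (T_ge0 : forall u, 0 <= T u).

Definition reduced_energy (u l : 'cV[R]_N) : R :=
  T u + norm1 (Dy *m (f - u - l)) + mu3 * norm21 (grad_xy *m l).

Lemma reduced_energy_sub_zprofile u l :
  reduced_energy u (l - zprofile l) = reduced_energy u l.
Proof.
rewrite /reduced_energy [grad_xy *m _]mulmxBr grad_xy_zprofile subr0.
by rewrite opprB addrA addrAC mulmxDr Dy_zprofile addr0.
Qed.

Lemma reduced_energy_continuous :
  continuous (fun ul : 'cV[R]_N * 'cV[R]_N => reduced_energy ul.1 ul.2).
Proof.
have fst_cont : continuous (@fst 'cV[R]_N 'cV[R]_N) by move=> ?; exact: cvg_fst.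
have snd_cont : continuous (@snd 'cV[R]_N 'cV[R]_N) by move=> ?; exact: cvg_snd.
have s_cont : continuous (fun vw : 'cV[R]_N * 'cV[R]_N => f - vw.1 - vw.2).
  move=> vw; apply: (continuousB (f := fun vw : 'cV[R]_N * _ => f - vw.1) (g := snd)).
    apply: (continuousB (f := fun=> f) (g := fst)); first exact: cst_continuous.
    exact: @fst_cont vw.
  exact: @snd_cont vw.
apply: continuous_addfun; first apply: continuous_addfun.
- by move=> vw; exact: continuous_comp (fst_cont vw) (@T_cont vw.1).
- move=> vw; exact: continuous_comp (s_cont vw) (@norm1_mulmx_continuous _ _ _ Dy _).
apply: continuous_scalefun => vw.
exact: continuous_comp (snd_cont vw) (@norm21_mulmx_continuous _ _ _ _ grad_xy _).
Qed.

Lemma reduced_energy_min :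
  exists u l, in_box u /\
    forall u' l', in_box u' -> reduced_energy u l <= reduced_energy u' l'.
Proof.
pose C0 := reduced_energy f 0; pose B := (nx + ny)%:R * (C0 / mu3).
pose K := [set v : 'cV[R]_N | forall i, `[0, 1]%classic (v i 0)]
  `*` [set v : 'cV[R]_N | forall i, `[- B, B]%classic (v i 0)].
have C0_ge0 : 0 <= C0.
  by rewrite /C0 /reduced_energy !addr_ge0 ?T_ge0 ?mulr_ge0 ?norm1_ge0 ?norm21_ge0 ?ltW.
have K_fst v : K v -> in_box v.1 by move=> [v1 _] i; have := v1 i; rewrite /= in_itv.
have K0 : K (f, 0).
  split=> i /=; rewrite in_itv /=; first exact: f_box.
  by rewrite mxE oppr_le0 andbb /B mulr_ge0 // divr_ge0 // ltW.
have K_compact : compact K.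
  by apply: compact_setX; apply: (cV_compact (A := fun=> `[_, _]%classic)) => i;
    exact: segment_compact.
have [[u l] /set_mem Kul ul_min] := compact_EVT_min (ex_intro _ _ K0) K_compact
  (continuous_subspaceT reduced_energy_continuous).
exists u, l; split; first exact: K_fst Kul.
move=> u' l' u'_box.
have [C0_le | lt_C0] := leP C0 (reduced_energy u' l').
  exact: le_trans (ul_min (f, 0) (mem_set K0)) C0_le.
rewrite -(reduced_energy_sub_zprofile u' l'); apply: (ul_min (u', l' - zprofile l')).
apply: mem_set; split=> i /=; rewrite in_itv /=; first exact: u'_box.
rewrite -ler_norml; apply: le_trans (ler_norm_sub_zprofile _ _) _.
rewrite ler_wpM2l // ler_pdivlMr // mulrC; apply: le_trans (ltW lt_C0).
by rewrite /reduced_energy lerDr addr_ge0 ?norm1_ge0.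
Qed.

Local Open Scope ereal_scope.

Lemma exists_box_split_minimizer :
  exists u s l, is_minimizer (fun u s l => ((T u)%:E + iota_box u)
    + (norm1 (Dy *m s))%:E + (mu3 * norm21 (grad_xy *m l))%R%:E) f u s l.
Proof.
have [u [l [u_box ul_min]]] := reduced_energy_min.
exists u, (f - u - l)%R, l; split=> [|u' s' l' sum_f].
  by rewrite [(u + _)%R]addrC addrAC !subrK.
have -> : s' = (f - u' - l')%R by rewrite -sum_f addrAC addrK addrC addKr.
have [u'_box | u'_nbox] := pselect (in_box u'); last first.
  by rewrite /iota_box (asboolF u'_nbox) addey // addye // leey.
rewrite /iota_box (asboolT u_box) (asboolT u'_box) !adde0 -!EFinD lee_fin.
exact: ul_min.
Qed.

End Existence.

Theorem proposition1 (R : realType) (nx ny nz : nat)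
  (hx : (1 <= nx)%N) (hy : (1 <= ny)%N) (hz : (1 <= nz)%N)
  (f : 'cV[R]_(nz * ny * nx)) (hf : in_box f)
  (mu1 mu2 mu3 : R) (h1 : 0 < mu1) (h2 : 0 < mu2) (h3 : 0 < mu3) :
  (exists u s l, is_minimizer (@energy_a R nx ny nz mu1 mu2 mu3) f u s l) /\
  (exists u s l, is_minimizer (@energy_b R nx ny nz mu1 mu3) f u s l).
Proof.
case: nx hx f hf => [//|nx] _; case: ny hy => [//|ny] _ f hf.
split; apply: exists_box_split_minimizer => //.
- by apply: continuous_addfun; apply: continuous_scalefun;
    [exact: norm21_mulmx_continuous | exact: norm1_mulmx_continuous].
- by move=> u; rewrite addr_ge0 ?mulr_ge0 ?norm21_ge0 ?norm1_ge0 ?ltW.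
- by apply: continuous_scalefun; exact: norm21_mulmx_continuous.
- by move=> u; rewrite mulr_ge0 ?norm21_ge0 ?ltW.
Qed.
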